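(* Let $N,n$ be positive integers such that $r=N/n$ is a prime power, and let $0\le p\le 1$. Then $c(G(N,p),P_{n+1})\le r+1$.
   Context: $G(N,p)$ denotes the Erdős–Rényi random graph on vertex set $[N]$ in which each pair is an edge independently with probability $p$. $P_k$ denotes the path on $k$ vertices. For graphs $G,F$, $c(G,F)$ denotes the minimum number $k$ such that there exists a coloring of the edges of $G$ with $k$ colors containing no monochromatic copy of $F$. (Floor and ceiling issues in divisibility, e.g. of $N$ by $r^2$, are ignored.) *)

From HB Require Import structures.
From mathcomp Require Import all_boot all_order all_algebra.
Set Implicit Arguments. Unset Strict Implicit. Unset Printing Implicit Defensive.
Import Order.TTheory GRing.Theory Num.Theory.

(* A (simple) graph on vertex set [N] = 'I_N is given by its edge set
   E : {set {set 'I_N}}, a set of 2-element subsets of 'I_N. *)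

Definition pairs (N : nat) : {set {set 'I_N}} := [set e : {set 'I_N} | #|e| == 2].

(* The coloring f (with k colors, defined on all pairs; only its values on
   edges of E matter) admits a monochromatic copy of P_{n+1} in E:
   n+1 distinct vertices v_0,...,v_n with every {v_i, v_{i+1}} (i < n)
   an edge of E, all these edges receiving the same color c. *)
Definition mono_path (N : nat) (E : {set {set 'I_N}}) (n k : nat)
    (f : {ffun {set 'I_N} -> 'I_k}) : bool :=
  [exists v : {ffun 'I_n.+1 -> 'I_N},
    injectiveb v &&
    [exists c : 'I_k, [forall i : 'I_n,
       ([set v (widen_ord (leqnSn n) i); v (lift ord0 i)] \in E) &&
       (f [set v (widen_ord (leqnSn n) i); v (lift ord0 i)] == c)]]].

Definition good_coloring (N : nat) (E : {set {set 'I_N}}) (n k : nat) : bool :=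
  [exists f : {ffun {set 'I_N} -> 'I_k}, ~~ mono_path E n f].

(* c(G, P_{n+1}) <= m : the minimum number of colors of a coloring with no
   monochromatic P_{n+1} is at most m, i.e. some k <= m works. *)
Definition col_num_le (N : nat) (E : {set {set 'I_N}}) (n m : nat) : bool :=
  [exists k : 'I_m.+1, good_coloring E n k].

(* Probability of the graph with edge set E under G(N,p): each pair is an
   edge independently with probability p. *)
Definition gnp_prob (R : realFieldType) (N : nat) (p : R)
    (E : {set {set 'I_N}}) : R :=
  if E \subset pairs N then
    (\prod_(e in pairs N) (if e \in E then p else 1 - p))%R
  else 0%R.

From Pilot Require Import Defs.
From HB Require Import structures.
From mathcomp Require Import all_boot all_order all_algebra.
From mathcomp Require Import finfield.
From mathcomp Require Import ring.
Import Order.TTheory GRing.Theory Num.Theory.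

Set Implicit Arguments.
Unset Strict Implicit.
Unset Printing Implicit Defensive.

(* Let F be the field with r elements and split [N] into r^2 blocks of
   s = N / r^2 vertices, one block per point of the affine plane F^2.  The
   lines of F^2 fall into r + 1 parallel classes, and any two points lie on a
   common line.  Colour an edge by a parallel class containing a line through
   the points of its two endpoints.  The edges of a monochromatic path then
   keep it inside the blocks of a single line, which hold r * s = n vertices
   only, so no monochromatic P_{n+1} exists.  Thus every graph on [N] has
   such a colouring, and the event has probability 1. *)

Lemma ord_chain_const (T : Type) (n : nat) (u : 'I_n.+1 -> T) :
  (forall i : 'I_n, u (widen_ord (leqnSn n) i) = u (lift ord0 i)) ->
  forall i, u i = u ord0.
Proof.
move=> u_step [m]; elim: m => [|m IHm] lt_m_n1.
  by congr u; apply: val_inj.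
have lt_m_n : (m < n)%N by [].
have := u_step (Ordinal lt_m_n).
have -> : widen_ord (leqnSn n) (Ordinal lt_m_n) = Ordinal (ltnW lt_m_n1).
  exact: val_inj.
have -> : lift ord0 (Ordinal lt_m_n) = Ordinal lt_m_n1 by exact: val_inj.
by move=> <-; apply: IHm.
Qed.

Section ClassColoring.

Variables (N n k : nat) (T : eqType) (g : 'I_k -> 'I_N -> T).

Definition class_coloring (c0 : 'I_k) : {ffun {set 'I_N} -> 'I_k} :=
  [ffun e : {set 'I_N} =>
     odflt c0 [pick c | [forall a in e, forall b in e, g c a == g c b]]].

Hypothesis g_cover : forall a b, exists c, g c a = g c b.

Lemma class_coloring_edge c0 a b :
  let c := class_coloring c0 [set a; b] in g c a = g c b.
Proof.
rewrite /= ffunE; case: pickP => [c /forall_inP g_c | no_c] /=.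
  by apply/eqP; move: (g_c a (set21 a b)) => /forall_inP; apply; apply: set22.
have [c gc_ab] := g_cover a b.
have /negP[] := no_c c.
by apply/forall_inP=> x /set2P[]->; apply/forall_inP=> y /set2P[]->;
  rewrite ?gc_ab.
Qed.

Hypothesis g_class_small : forall c t, (#|[set x | g c x == t]| <= n)%N.

Lemma class_coloring_no_mono_path (c0 : 'I_k) (E : {set {set 'I_N}}) :
  ~~ Defs.mono_path E n (class_coloring c0).
Proof.
apply/negP=> /existsP[v /andP[/injectiveP v_inj /existsP[c /forallP mono_c]]].
have g_v_const : forall i, g c (v i) = g c (v ord0).
  apply: (@ord_chain_const _ _ (fun i => g c (v i))) => i.
  by have /andP[_ /eqP <-] := mono_c i; apply: class_coloring_edge.
have path_in_class : [set v i | i in 'I_n.+1] \subset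
    [set x | g c x == g c (v ord0)].
  by apply/subsetP=> _ /imsetP[i _ ->]; rewrite inE g_v_const.
have := leq_trans (subset_leq_card path_in_class) (g_class_small _ _).
by rewrite card_imset // card_ord ltnn.
Qed.

End ClassColoring.

Section AffinePlane.

Variable F : fieldType.
Local Open Scope ring_scope.

(* The lines of F^2 in direction [None] are the verticals [x = t]; those in
   direction [Some m] are the lines [y = m x + t].  [line_of o P] is the [t]
   of the line of direction [o] through [P], and [pos_on_line o P] locates [P]
   on that line. *)
Definition line_of (o : option F) (P : F * F) : F :=
  if o is Some m then P.2 - m * P.1 else P.1.

Definition pos_on_line (o : option F) (P : F * F) : F :=
  if o is Some _ then P.1 else P.2.

Lemma line_of_pos_inj o P Q :
  line_of o P = line_of o Q -> pos_on_line o P = pos_on_line o Q -> P = Q.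
Proof.
case: P Q => [x1 y1] [x2 y2]; case: o => [m|] /= eq_line eq_pos.
  by rewrite eq_pos in eq_line *; move/addIr: eq_line => ->.
by rewrite eq_line eq_pos.
Qed.

Lemma exists_common_line P Q : exists o, line_of o P = line_of o Q.
Proof.
case: P Q => [x1 y1] [x2 y2].
have [->|neq_x] := eqVneq x1 x2; first by exists None.
have dx_neq0 : x2 - x1 != 0 by rewrite subr_eq0 eq_sym.
exists (Some ((y2 - y1) / (x2 - x1))) => /=.
by apply/eqP; rewrite -subr_eq0; apply/eqP; field.
Qed.

End AffinePlane.

Lemma card_line (F : finFieldType) (o : option F) (t : F) :
  (#|[set P | line_of o P == t]| <= #|F|)%N.
Proof.
apply: (leq_card_in (pos_on_line o)) => P Q.
rewrite !inE => /eqP line_P /eqP line_Q.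
by apply: line_of_pos_inj; rewrite line_P.
Qed.

Section BlowUp.

Variables (T : finType) (N s : nat).
Hypotheses (s_pos : (0 < s)%N) (N_le : (N <= #|T| * s)%N).

Lemma block_index_lt (x : 'I_N) : (x %/ s < #|T|)%N.
Proof. by rewrite ltn_divLR // (leq_trans _ N_le). Qed.

Definition block (x : 'I_N) : T := enum_val (Ordinal (block_index_lt x)).

Lemma card_block_preim (A : {set T}) :
  (#|[set x | block x \in A]| <= #|A| * s)%N.
Proof.
pose code x := (block x, Ordinal (ltn_pmod x s_pos)).
have code_inj : injective code.
  move=> x y [/enum_val_inj [div_xy] mod_xy]; apply: val_inj.
  by rewrite /= (divn_eq x s) (divn_eq y s) div_xy mod_xy.
have -> : (#|A| * s = #|setX A [set: 'I_s]|)%N.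
  by rewrite cardsX cardsT card_ord.
rewrite -(card_imset _ code_inj).
apply/subset_leq_card/subsetP=> _ /imsetP[x A_x ->].
by rewrite inE in A_x; rewrite !inE A_x.
Qed.

End BlowUp.

Lemma affine_col_num_le (F : finFieldType) (N n s : nat)
    (E : {set {set 'I_N}}) :
  (0 < s)%N -> N = (#|F| * #|F| * s)%N -> n = (#|F| * s)%N ->
  col_num_le E n #|F|.+1.
Proof.
move=> s_pos N_def n_def.
have N_le : (N <= #|{: F * F}| * s)%N by rewrite card_prod N_def.
pose pt := block s_pos N_le.
pose g (c : 'I_#|{: option F}|) x := line_of (enum_val c) (pt x).
have lt_colors : (#|{: option F}| < #|F|.+2)%N by rewrite card_option.
apply/existsP; exists (Ordinal lt_colors); apply/existsP.
exists (class_coloring g (enum_rank None)).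
apply: class_coloring_no_mono_path => [a b | c t].
  have [o line_ab] := exists_common_line (pt a) (pt b).
  by exists (enum_rank o); rewrite /g enum_rankK.
have -> : [set x | g c x == t] =
    [set x | pt x \in [set P | line_of (enum_val c) P == t]].
  by apply/setP=> x; rewrite !inE.
rewrite n_def (leq_trans (card_block_preim _ _ _)) //.
by rewrite leq_mul2r card_line orbT.
Qed.

Lemma sum_gnp_prob (R : realFieldType) (N : nat) (p : R) :
  (\sum_(E : {set {set 'I_N}}) gnp_prob p E = 1)%R.
Proof.
(* Giving non-pairs weight 0 as edges and 1 as non-edges absorbs the
   [E \subset pairs N] test, so [gnp_prob p E] is the [E]-term of the
   expansion of [\prod_e (edge_wt e + nonedge_wt e) = 1]. *)
pose edge_wt (e : {set 'I_N}) : R := if e \in pairs N then p else 0%R.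
pose nonedge_wt (e : {set 'I_N}) : R :=
  if e \in pairs N then (1 - p)%R else 1%R.
have gnp_prod E : gnp_prob p E =
    (\prod_e (if e \in E then edge_wt e else nonedge_wt e))%R.
  rewrite /gnp_prob; case: ifP => [E_sub | /negbT/subsetPn[e E_e e_nonpair]].
    rewrite [RHS](bigID (mem (pairs N))) /= [X in (_ * X)%R]big1 ?mulr1.
      by apply: eq_bigr => e e_pair; rewrite /edge_wt /nonedge_wt e_pair.
    move=> e e_nonpair; have /negPf-> : e \notin E.
      by apply: contraNN e_nonpair; apply/subsetP.
    by rewrite /nonedge_wt (negPf e_nonpair).
  by rewrite (bigD1 e) //= E_e /edge_wt (negPf e_nonpair) mul0r.
under eq_bigr do rewrite gnp_prod.
rewrite -(bigA_distr 1%R +%R edge_wt nonedge_wt) /=.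
apply: big1 => e _; rewrite /edge_wt /nonedge_wt.
by case: ifP => _; rewrite ?subrKC ?add0r.
Qed.

Theorem theorem5p2 (R : realFieldType) (N n r q k : nat) (p : R) :
  (0 < N)%N -> (0 < n)%N -> N = (r * n)%N ->
  prime q -> (0 < k)%N -> r = (q ^ k)%N ->
  (r ^ 2 %| N)%N ->
  (0 <= p)%R -> (p <= 1)%R ->
  (\sum_(E : {set {set 'I_N}} | col_num_le E n r.+1) gnp_prob p E = 1)%R.
Proof.
move=> N_pos _ N_def q_prime k_pos r_def r2_dvd_N _ _.
have [F _ card_F] := pPrimePowerField q_prime k_pos; rewrite -r_def in card_F.
have r_pos : (0 < r)%N by rewrite r_def expn_gt0 prime_gt0.
set s := (N %/ r ^ 2)%N.
have N_blocks : N = (r * r * s)%N by rewrite mulnn mulnC divnK.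
have s_pos : (0 < s)%N by move: N_pos; rewrite N_blocks muln_gt0 => /andP[].
have n_def : n = (r * s)%N.
  by apply/eqP; rewrite -(eqn_pmul2l r_pos) -N_def N_blocks mulnA.
rewrite -(sum_gnp_prob N p); apply: eq_bigl => E.
by rewrite -card_F (affine_col_num_le _ s_pos) // card_F.
Qed.
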